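(* Let $\sigma : X^+ \to S$ be a semigroup choice of generators for a semigroup $S$ and $u, v \in X^+$; then $u\sigma = v\sigma$ if and only if $u\overline{v} \in L_\sigma(S)$. Similarly, if $\sigma : X^* \to M$ is a monoid choice of generators for a monoid $M$ and $u, v \in X^*$, then $u\sigma = v\sigma$ if and only if $u\overline{v} \in L_\sigma(M)$.
   Context: Maps are written on the right. $X^*$, $X^+$: free monoid and free semigroup on $X$. Let $\overline{X} = \{\overline{x} : x \in X\}$ be new symbols, $\hat{X} = X \cup \overline{X}$, with $\overline{x_1\cdots x_n} = \overline{x_n}\cdots\overline{x_1}$ for $x_i \in X$. For a monoid $M$ and surjective monoid morphism $\sigma : X^* \to M$, the loop automaton has vertex set $M$, for each $a \in M$, $x \in X$ an edge $a \to a(x\sigma)$ labelled $x$ and an edge $a(x\sigma) \to a$ labelled $\overline{x}$; the loop problem $L_\sigma(M)$ is the set of labels of paths from the identity to the identity. For a semigroup $S$ and surjective morphism $\sigma : X^+ \to S$, $L_\sigma(S)$ is the loop problem of $S^1$ ($S$ with a new identity adjoined, even if one exists) with respect to the unique extension $\sigma^1 : X^* \to S^1$. *)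

(* words are lists. Maps written on the right: a(x sigma) = mul a (sigma x). *)
From Stdlib Require Import List.
Import ListNotations.

Set Implicit Arguments.

(* Letters of hat X = X ∪ bar X: inl x is x, inr x is bar x. *)
Definition hat (X : Type) := (X + X)%type.

Definition emb {X : Type} (u : list X) : list (hat X) := map (@inl X X) u.

Definition wbar {X : Type} (u : list X) : list (hat X) := rev (map (@inr X X) u).

(* Paths in the loop automaton of (M, mul, one) with generators gen x = x sigma:
   edge a -> mul a (gen x) labelled x, edge mul a (gen x) -> a labelled bar x. *)
Inductive lpath {X M : Type} (mul : M -> M -> M) (gen : X -> M) :
    M -> list (hat X) -> M -> Prop :=
| lpath_nil : forall a, lpath mul gen a [] a
| lpath_fwd : forall a x w b,
    lpath mul gen (mul a (gen x)) w b -> lpath mul gen a (inl x :: w) b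
| lpath_bwd : forall a x w b,
    lpath mul gen a w b -> lpath mul gen (mul a (gen x)) (inr x :: w) b.

Definition loop_problem {X M : Type} (mul : M -> M -> M) (one : M) (gen : X -> M)
  (w : list (hat X)) : Prop := lpath mul gen one w one.

(* S^1: S with a new identity None adjoined. *)
Definition mul1 {S : Type} (mul : S -> S -> S) (a b : option S) : option S :=
  match a, b with
  | None, _ => b
  | _, None => a
  | Some x, Some y => Some (mul x y)
  end.

Definition is_monoid_choice {X M : Type} (mul : M -> M -> M) (one : M)
  (sigma : list X -> M) : Prop :=
  sigma [] = one /\
  (forall u v, sigma (u ++ v) = mul (sigma u) (sigma v)) /\
  (forall m, exists u, sigma u = m).

(* Semigroup choice of generators: surjective semigroup morphism X^+ -> S,
   X^+ = nonempty lists (value of sigma on [] is irrelevant). *)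
Definition is_semigroup_choice {X S : Type} (mul : S -> S -> S)
  (sigma : list X -> S) : Prop :=
  (forall u v, u <> [] -> v <> [] -> sigma (u ++ v) = mul (sigma u) (sigma v)) /\
  (forall s, exists u, u <> [] /\ sigma u = s).

(* L_sigma(S) := loop problem of S^1 w.r.t. sigma^1, sigma^1(x) = Some (x sigma). *)
Definition sg_loop_problem {X S : Type} (mul : S -> S -> S) (sigma : list X -> S)
  (w : list (hat X)) : Prop :=
  loop_problem (mul1 mul) None (fun x => Some (sigma [x])) w.

Definition mon_loop_problem {X M : Type} (mul : M -> M -> M) (one : M)
  (sigma : list X -> M) (w : list (hat X)) : Prop :=
  loop_problem mul one (fun x => sigma [x]) w.

(* In the loop automaton the forward word u read from a ends at a(u sigma),
   and a barred word wbar v traces a path labelled v backwards. Hence a path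
   1 --u wbar v--> 1 exists iff u and v lead from 1 to the same vertex, that
   is, iff u sigma = v sigma. The semigroup case is the monoid case for S^1,
   since sigma^1 is a monoid morphism X^* -> S^1. *)
From Stdlib Require Import List.
Import ListNotations.

Set Implicit Arguments.

Section LoopAutomaton.
Variables (X M : Type) (mul : M -> M -> M) (gen : X -> M).

Definition run (u : list X) (a : M) : M := fold_left (fun a x => mul a (gen x)) u a.

Lemma lpath_app a w1 w2 c :
  lpath mul gen a (w1 ++ w2) c <->
  exists b, lpath mul gen a w1 b /\ lpath mul gen b w2 c.
Proof.
  revert a; induction w1 as [|l w1 IH]; intros a; simpl; split.
  - intros H; exists a; split; [constructor | exact H].
  - intros [b [Hab Hbc]]; inversion Hab; subst; exact Hbc.
  - intros H; inversion H; subst; apply IH in H4; destruct H4 as [b [Hb Hc]];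
      exists b; (split; [constructor; exact Hb | exact Hc]).
  - intros [b [Hab Hbc]]; inversion Hab; subst; constructor; apply IH; eauto.
Qed.

Lemma lpath_emb u a b : lpath mul gen a (emb u) b <-> b = run u a.
Proof.
  revert a; induction u as [|x u IH]; intros a; simpl; split.
  - intros H; inversion H; reflexivity.
  - intros ->; constructor.
  - intros H; inversion H; subst; apply IH; assumption.
  - intros H; constructor; apply IH; exact H.
Qed.

Lemma lpath_wbar v a b : lpath mul gen a (wbar v) b <-> lpath mul gen b (emb v) a.
Proof.
  revert a b; induction v as [|x v IH]; intros a b; unfold wbar, emb in *; simpl.
  - split; intros H; inversion H; constructor.
  - rewrite lpath_app; split.
    + intros [c [Hac Hcb]]; apply IH in Hac.
      inversion Hcb as [|? ? ? ? Hnil|? ? ? ? Hnil]; subst.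
      inversion Hnil; subst; constructor; exact Hac.
    + intros H; inversion H; subst; exists (mul b (gen x)); split.
      * apply IH; assumption.
      * repeat constructor.
Qed.

Lemma loop_problem_emb_wbar (one : M) u v :
  loop_problem mul one gen (emb u ++ wbar v) <-> run u one = run v one.
Proof.
  unfold loop_problem; rewrite lpath_app; split.
  - intros [b [Hu Hv]]; apply lpath_emb in Hu; apply lpath_wbar, lpath_emb in Hv.
    congruence.
  - intros H; exists (run u one); split.
    + apply lpath_emb; reflexivity.
    + apply lpath_wbar, lpath_emb; exact H.
Qed.

End LoopAutomaton.

Section MonoidMorphism.
Variables (X M : Type) (mul : M -> M -> M) (one : M) (sigma : list X -> M).
Hypothesis mulA : forall a b c, mul a (mul b c) = mul (mul a b) c.
Hypothesis mul1m : forall a, mul one a = a.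
Hypothesis mulm1 : forall a, mul a one = a.
Hypothesis sigma_nil : sigma [] = one.
Hypothesis sigma_app : forall u v, sigma (u ++ v) = mul (sigma u) (sigma v).

Lemma run_morphism w a : run mul (fun x => sigma [x]) w a = mul a (sigma w).
Proof.
  revert a; induction w as [|x w IH]; intros a; simpl.
  - rewrite sigma_nil, mulm1; reflexivity.
  - rewrite IH, <- mulA, <- sigma_app; reflexivity.
Qed.

Lemma mon_loop_problem_emb_wbar u v :
  sigma u = sigma v <-> mon_loop_problem mul one sigma (emb u ++ wbar v).
Proof.
  unfold mon_loop_problem; rewrite loop_problem_emb_wbar, !run_morphism, !mul1m.
  reflexivity.
Qed.

End MonoidMorphism.

Section AdjoinIdentity.
Variables (X S : Type) (mul : S -> S -> S) (sigma : list X -> S).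
Hypothesis mulA : forall a b c, mul a (mul b c) = mul (mul a b) c.
Hypothesis sigma_app :
  forall u v, u <> [] -> v <> [] -> sigma (u ++ v) = mul (sigma u) (sigma v).

Lemma mul1A a b c : mul1 mul a (mul1 mul b c) = mul1 mul (mul1 mul a b) c.
Proof. destruct a, b, c; simpl; rewrite ?mulA; reflexivity. Qed.

Lemma mul1m1 a : mul1 mul a None = a.
Proof. destruct a; reflexivity. Qed.

Definition sigma1 (w : list X) : option S :=
  match w with [] => None | _ => Some (sigma w) end.

Lemma sigma1_app u v : sigma1 (u ++ v) = mul1 mul (sigma1 u) (sigma1 v).
Proof.
  destruct u as [|x u]; [reflexivity|].
  destruct v as [|y v]; [rewrite app_nil_r; reflexivity|].
  simpl; rewrite <- sigma_app by discriminate; reflexivity.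
Qed.

Lemma sg_loop_problem_emb_wbar u v : u <> [] -> v <> [] ->
  sigma u = sigma v <-> sg_loop_problem mul sigma (emb u ++ wbar v).
Proof.
  intros Hu Hv.
  (* [sigma1 [x]] computes to [Some (sigma [x])]. *)
  change (sg_loop_problem mul sigma (emb u ++ wbar v)) with
    (mon_loop_problem (mul1 mul) None sigma1 (emb u ++ wbar v)).
  rewrite <- mon_loop_problem_emb_wbar.
  - destruct u, v; try congruence; simpl; split; congruence.
  - exact mul1A.
  - intros a; reflexivity.
  - exact mul1m1.
  - reflexivity.
  - exact sigma1_app.
Qed.

End AdjoinIdentity.

Theorem corollary4p2 :
  (forall (X S : Type) (mul : S -> S -> S) (sigma : list X -> S),
      (forall a b c, mul a (mul b c) = mul (mul a b) c) ->
      is_semigroup_choice mul sigma ->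
      forall u v : list X, u <> [] -> v <> [] ->
        (sigma u = sigma v <-> sg_loop_problem mul sigma (emb u ++ wbar v)))
  /\
  (forall (X M : Type) (mul : M -> M -> M) (one : M) (sigma : list X -> M),
      (forall a b c, mul a (mul b c) = mul (mul a b) c) ->
      (forall a, mul one a = a) -> (forall a, mul a one = a) ->
      is_monoid_choice mul one sigma ->
      forall u v : list X,
        (sigma u = sigma v <-> mon_loop_problem mul one sigma (emb u ++ wbar v))).
Proof.
  split.
  - intros X S mul sigma mulA [sigma_app _].
    apply sg_loop_problem_emb_wbar; assumption.
  - intros X M mul one sigma mulA mul1m mulm1 [sigma_nil [sigma_app _]].
    apply mon_loop_problem_emb_wbar; assumption.
Qed.
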